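(* Let $G$ be a cycle of cliques. Then $Z_+(G)\le |V(G)|-\operatorname{cc}(G)+2$.
   Context: $\operatorname{cc}(G)$ is the minimum number of cliques needed to cover all edges of $G$. A min-max clique covering is a clique covering of size $\operatorname{cc}(G)$ consisting of maximal cliques. $G$ is a cycle of cliques if it has a min-max clique covering $\{C_1,\dots,C_\ell\}$ such that $C_i\cap C_{i+1}\neq\emptyset$ for $i=1,\dots,\ell-1$ and $C_1\cap C_\ell\neq\emptyset$, while all other pairwise intersections $C_i\cap C_j$ are empty. $Z_+(G)$ is the positive zero forcing number: the minimum size of a set $B$ of initially black vertices such that repeated application of the rule ''let $W_1,\dots,W_k$ be the vertex sets of components of $G$ minus the black vertices; a black vertex $u$ whose only white neighbour in the subgraph induced by $W_i\cup(\text{black vertices})$ is $w$ may turn $w$ black'' eventually makes all vertices black. *)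

(* A simple graph G is a symmetric irreflexive relation
   e : rel T on a finite vertex type T; V(G) = T, |V(G)| = #|T|. *)
From mathcomp Require Import all_boot all_order all_algebra.
Set Implicit Arguments. Unset Strict Implicit. Unset Printing Implicit Defensive.

Section Graphs.
Variables (T : finType) (e : rel T).

Definition clique (C : {set T}) : bool :=
  [forall x in C, forall y in C, (x != y) ==> e x y].

Definition maximal_clique (C : {set T}) : bool := maxset clique C.

Definition edge_cover (P : {set {set T}}) : bool :=
  [forall x, forall y, e x y ==> [exists C in P, (x \in C) && (y \in C)]].

Definition clique_covering (P : {set {set T}}) : bool :=
  [forall C in P, clique C] && edge_cover P.

(** The default value #|{set T}|
    of the iterated minimum is an upper bound for the size of every family
    of vertex sets, and a clique covering always exists for a simple graph
    (e.g. all cliques), so this is exactly the minimum. *)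
Definition cc : nat :=
  \big[minn/#|{set T}|]_(P : {set {set T}} | clique_covering P) #|P|.

Definition minmax_clique_covering (s : seq {set T}) : bool :=
  [&& uniq s, size s == cc, all maximal_clique s & clique_covering [set C in s]].

(** cycle of cliques (indices shifted to 0 .. l-1) *)
Definition cycle_of_cliques : Prop :=
  exists s : seq {set T},
    let l := size s in
    let C := fun i => nth set0 s i in
    [/\ minmax_clique_covering s,
        0 < l,
        (forall i, i.+1 < l -> C i :&: C i.+1 != set0),
        C 0 :&: C l.-1 != set0 &
        (forall i j, i < j < l -> j != i.+1 -> ~~ ((i == 0) && (j == l.-1)) ->
            C i :&: C j = set0)].

Definition white_rel (B : {set T}) : rel T :=
  [rel x y | [&& x \notin B, y \notin B & e x y]].

(* black u may force white w: w lies in a component W of G - B, and w is the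
   only white neighbour of u in G[W ∪ B] *)
Definition pforce (B : {set T}) (u w : T) : bool :=
  [&& u \in B, w \notin B, e u w &
      [forall v, [&& v \notin B, connect (white_rel B) w v & e u v] ==> (v == w)]].

Definition pforce_step (B : {set T}) : {set T} :=
  B :|: [set w | [exists u, pforce B u w]].

(* the final colouring: iterating #|T| rounds reaches the fixpoint *)
Definition pclosure (B : {set T}) : {set T} := iter #|T| pforce_step B.

Definition pos_zero_forcing_set (B : {set T}) : bool := pclosure B == setT.

Lemma pzf_exists : exists k, [exists B : {set T}, (#|B| == k) && pos_zero_forcing_set B].
Proof.
exists #|[set: T]|; apply/existsP; exists setT; rewrite eqxx /=.
rewrite /pos_zero_forcing_set /pclosure; elim: #|T| => //= n /eqP ->.
by apply/eqP/setP=> x; rewrite !inE.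
Qed.

Definition Zplus : nat := ex_minn pzf_exists.

End Graphs.

From mathcomp Require Import all_boot all_order all_algebra zify.
Set Implicit Arguments. Unset Strict Implicit. Unset Printing Implicit Defensive.

(* Pick x_i in C_i :&: C_(i+1) for i < l - 1.  Colour x_1, ..., x_(l-2) white
   and everything else black.  When l >= 4 each x_i lies only in C_i and
   C_(i+1), so the sole white neighbour of x_(i-1) that remains is x_i and
   the x_i are forced one after the other (already in the standard sense):
   Z_+(G) <= |V| - (l - 2) with l = cc(G).  For l = 3 one edge, forced by
   its other end, suffices, and l <= 2 is trivial. *)

Section ZeroForcing.
Variables (T : finType) (e : rel T).

Lemma Zplus_min (B : {set T}) : pos_zero_forcing_set e B -> Zplus e <= #|B|.
Proof.
move=> zfB; rewrite /Zplus; case: ex_minnP => m _; apply.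
by apply/existsP; exists B; rewrite eqxx.
Qed.

Lemma pforce_step_subset (B : {set T}) : B \subset pforce_step e B.
Proof. exact: subsetUl. Qed.

Lemma pos_zero_forcing_iter (B : {set T}) (m : nat) :
  m <= #|T| -> iter m (pforce_step e) B = setT -> pos_zero_forcing_set e B.
Proof.
move=> le_mT itB; rewrite /pos_zero_forcing_set /pclosure -(subnK le_mT) iterD itB.
elim: (_ - m) => //= n /eqP ->.
by rewrite eqEsubset subsetT pforce_step_subset.
Qed.

Lemma Zplus_le_card : Zplus e <= #|T|.
Proof. by rewrite -cardsT; apply/Zplus_min/(@pos_zero_forcing_iter _ 0). Qed.

(* A standard zero forcing move is a positive one: the connectivity
   condition of [pforce] only restricts which white neighbours count. *)
Lemma mem_pforce_step (B : {set T}) (u w : T) :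
  u \in B -> w \notin B -> e u w ->
  (forall v, v \notin B -> e u v -> v = w) -> w \in pforce_step e B.
Proof.
move=> uB wB euw white_w; rewrite inE; apply/orP; right.
rewrite inE; apply/existsP; exists u; rewrite /pforce uB wB euw.
by apply/forallP=> v; apply/implyP=> /and3P [vB _ euv]; rewrite (white_w v).
Qed.

Section ForcingChain.
Variables (k : nat) (w u : nat -> T).
Hypothesis u_black : forall i j, i <= j < k -> u i != w j.
Hypothesis u_adj_w : forall i, i < k -> e (u i) (w i).
Hypothesis u_only_w : forall i j, i <= j < k -> e (u i) (w j) -> j = i.

Let W (i : nat) : {set T} := [set w (val j) | j : 'I_k & i <= j].

Lemma memWP i x : reflect (exists2 j, i <= j < k & x = w j) (x \in W i).
Proof.
apply: (iffP imsetP) => [[j] | [j /andP [le_ij lt_jk] ->]].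
  by rewrite inE => le_ij ->; exists j; rewrite ?le_ij ?ltn_ord.
by exists (Ordinal lt_jk); rewrite ?inE.
Qed.

Lemma card_W0 : #|W 0| = k.
Proof.
(* w is injective: u i is adjacent to w i but to no later w j. *)
rewrite card_in_imset; last first.
  move=> i j _ _ /= wij; apply/val_inj.
  wlog le_ij : i j wij / i <= j.
    by move=> IH; case: (leqP i j) => [|/ltnW] le; [|symmetry]; apply: IH.
  by apply/esym/(u_only_w (i:=i)); rewrite ?le_ij ?ltn_ord // -wij u_adj_w.
by rewrite -[RHS]card_ord; apply: eq_card => j; rewrite inE.
Qed.

Lemma forced_prefix i : i <= k -> ~: W i \subset iter i (pforce_step e) (~: W 0).
Proof.
elim: i => [|i IH] lt_ik //=; have {}IH := IH (ltnW lt_ik).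
set B := iter i _ _ in IH *.
have white_W v : v \notin B -> v \in W i.
  by apply: contraR => vW; apply: (subsetP IH); rewrite inE.
apply/subsetP=> x; rewrite inE => xWi1.
have [xB | xB] := boolP (x \in B); first exact: (subsetP (pforce_step_subset _)).
have {xWi1}xi : x = w i.
  case/memWP: (white_W _ xB) => j /andP [le_ij lt_jk] xj; rewrite xj; congr w; apply/eqP.
  rewrite eqn_leq le_ij andbT leqNgt; apply: contra xWi1 => lt_ij.
  by apply/memWP; exists j; rewrite ?lt_ij.
rewrite xi in xB *; apply: (@mem_pforce_step _ (u i)) => //.
- apply: (subsetP IH); rewrite inE; apply/memWP => -[j ij uij].
  by move: (u_black ij); rewrite uij eqxx.
- exact: u_adj_w.
- move=> v /white_W /memWP [j ij ->] euv.
  by rewrite (u_only_w ij euv).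
Qed.

Lemma Zplus_forcing_chain : Zplus e + k <= #|T|.
Proof.
have le_kT : k <= #|T| by rewrite -card_W0 max_card.
have W_k : W k = set0.
  apply/setP=> x; rewrite in_set0; apply/negbTE/memWP => -[j /andP [le_kj lt_jk] _].
  by move: (leq_ltn_trans le_kj lt_jk); rewrite ltnn.
have zf_W0 : pos_zero_forcing_set e (~: W 0).
  apply: (pos_zero_forcing_iter le_kT); apply/eqP.
  by rewrite eqEsubset subsetT -setC0 -W_k forced_prefix.
by have := Zplus_min zf_W0; rewrite cardsCs setCK card_W0; lia.
Qed.

End ForcingChain.

Lemma Zplus_lt_card (u v : T) : u != v -> e u v -> Zplus e < #|T|.
Proof.
move=> uv euv; rewrite -addn1.
by apply: (@Zplus_forcing_chain 1 (fun=> v) (fun=> u)) => // i j ij _; lia.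
Qed.

End ZeroForcing.

Lemma clique_edge (T : finType) (e : rel T) (C : {set T}) (u v : T) :
  clique e C -> u \in C -> v \in C -> u != v -> e u v.
Proof. by move=> /forall_inP clC uC vC; move: (clC u uC) => /forall_inP/(_ v vC)/implyP. Qed.

Lemma edge_of_meeting_cliques (T : finType) (e : rel T) (C D : {set T}) :
  clique e C -> clique e D -> C != D -> C :&: D != set0 ->
  exists u v, u != v /\ e u v.
Proof.
move=> clC clD CD /set0Pn [u /setIP [uC uD]].
move: CD; rewrite eqEsubset negb_and => /orP [] /subsetPn [v vX vY];
  exists u, v; have uv : u != v by apply: contraNneq vY => <-.
- by split; rewrite ?(clique_edge clC).
- by split; rewrite ?(clique_edge clD).
Qed.

Section CycleOfCliques.
Variables (T : finType) (e : rel T) (s : seq {set T}).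
Local Notation l := (size s).
Local Notation C i := (nth set0 s i).
Hypothesis disjoint_far : forall i j, i < j < l -> j != i.+1 ->
  ~~ ((i == 0) && (j == l.-1)) -> C i :&: C j = set0.

Lemma meet_nth_adjacent a b v : a < b < l -> v \in C a -> v \in C b ->
  b = a.+1 \/ (a = 0 /\ b = l.-1).
Proof.
move=> abl vCa vCb; case: (eqVneq b a.+1) => [|ba]; first by left.
case: (boolP ((a == 0) && (b == l.-1))) => [/andP [/eqP -> /eqP ->] | far]; first by right.
by move/setP/(_ v): (disjoint_far abl ba far); rewrite inE vCa vCb in_set0.
Qed.

Lemma mem_nth_meet i m v : 3 < l -> i.+1 < l -> m < l ->
  v \in C i :&: C i.+1 -> v \in C m -> m = i \/ m = i.+1.
Proof.
move=> lt3l lt_il lt_ml /setIP [vCi vCi1] vCm.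
case: (ltngtP m i) => [lt_mi | lt_im | ->]; last by left.
- have := @meet_nth_adjacent m i v ltac:(lia) vCm vCi.
  have := @meet_nth_adjacent m i.+1 v ltac:(lia) vCm vCi1.
  lia.
- case: (eqVneq m i.+1) => [->|mi1]; first by right.
  have := @meet_nth_adjacent i m v ltac:(lia) vCi vCm.
  have := @meet_nth_adjacent i.+1 m v ltac:(lia) vCi1 vCm.
  lia.
Qed.

Hypothesis covering_s : clique_covering e [set D in s].

Lemma clique_nth i : i < l -> clique e (C i).
Proof.
by move=> lt_il; case/andP: covering_s => /forall_inP clP _; apply: clP; rewrite inE mem_nth.
Qed.

Lemma edge_in_nth u v : e u v -> exists2 m, m < l & (u \in C m) && (v \in C m).
Proof.
move=> euv; case/andP: covering_s => _ /forallP/(_ u)/forallP/(_ v)/implyP/(_ euv).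
case/exists_inP => D; rewrite inE => Ds uvD.
by exists (index D s); rewrite ?index_mem ?nth_index.
Qed.

Hypothesis meet_succ : forall i, i.+1 < l -> C i :&: C i.+1 != set0.

Lemma meet_points :
  1 < l -> exists x : nat -> T, forall i, i.+1 < l -> x i \in C i :&: C i.+1.
Proof.
move=> /meet_succ /set0Pn [v0 _].
exists (fun i => odflt v0 [pick v in C i :&: C i.+1]) => i /meet_succ /set0Pn [v vCC].
by case: pickP => [//| /(_ v)]; rewrite vCC.
Qed.

Lemma Zplus_long_cycle : 3 < l -> Zplus e + (l - 2) <= #|T|.
Proof.
move=> lt3l; have [x x_meet] := meet_points (ltnW (ltnW lt3l)).
have x_mem i m : i.+1 < l -> m < l -> x i \in C m -> m = i \/ m = i.+1.
  by move=> lt_il lt_ml; apply: mem_nth_meet lt_ml (x_meet _ lt_il).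
have x_neq i j : i <= j -> j.+2 < l -> x i != x j.+1.
  move=> le_ij lt_jl; apply/eqP => xij.
  have /setIP [_ xCj2] := x_meet _ lt_jl; rewrite -xij in xCj2.
  by have := x_mem i j.+2 ltac:(lia) lt_jl xCj2; lia.
apply: (@Zplus_forcing_chain _ _ (l - 2) (fun i => x i.+1) x)
  => [i j ij | i lt_il | i j ij euv].
- by apply: x_neq; lia.
- have /setIP [_ xCi1] := x_meet i ltac:(lia).
  have /setIP [x'Ci1 _] := x_meet i.+1 ltac:(lia).
  by apply: (clique_edge (clique_nth _)) xCi1 x'Ci1 (x_neq _ _ _ _); lia.
- have [m lt_ml /andP [xCm x'Cm]] := edge_in_nth euv.
  have := x_mem i m ltac:(lia) lt_ml xCm.
  have := x_mem j.+1 m ltac:(lia) lt_ml x'Cm.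
  lia.
Qed.

Hypothesis uniq_s : uniq s.

Lemma Zplus_lt_card_cycle : 1 < l -> Zplus e < #|T|.
Proof.
move=> lt1l; have lt0l := ltnW lt1l.
have C01 : C 0 != C 1 by rewrite nth_uniq.
have [u [v [uv euv]]] :=
  edge_of_meeting_cliques (clique_nth lt0l) (clique_nth lt1l) C01 (meet_succ lt1l).
exact: Zplus_lt_card uv euv.
Qed.

End CycleOfCliques.

Local Open Scope ring_scope.

Theorem mainTheorem8 (T : finType) (e : rel T) :
  symmetric e -> irreflexive e -> cycle_of_cliques e ->
  (Zplus e)%:Z <= (#|T|)%:Z - (cc e)%:Z + 2.
Proof.
move=> _ _ [s [/and4P [uniq_s /eqP <- _ covering_s] _ meet_s _ disjoint_s]].
suff : (Zplus e + size s <= #|T| + 2)%N by lia.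
have [l_le2 | l_gt2] := leqP (size s) 2; first by have := Zplus_le_card e; lia.
have [l_le3 | l_gt3] := leqP (size s) 3.
  by have := Zplus_lt_card_cycle covering_s meet_s uniq_s (ltnW l_gt2); lia.
by have := Zplus_long_cycle disjoint_s covering_s meet_s l_gt3; lia.
Qed.
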